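(* $\mathcal{L}_{\mathsf{SAFA}}\subsetneq\mathcal{L}_{\mathsf{CCA}}$: every data language accepted by a SAFA is accepted by some class counting automaton, and some data language accepted by a class counting automaton is accepted by no SAFA.
   Context: $D$ is a fixed countably infinite set of data values; for a finite alphabet $\Sigma$, data languages are subsets of $(\Sigma\times D)^*$. A set augmented finite automaton (SAFA) is a tuple $M=(Q,\Sigma\times D,q_0,F,H,\delta)$: $Q$ finite set of states, $q_0\in Q$ initial, $F\subseteq Q$ final, $H=\{h_1,\dots,h_m\}$ a finite collection of (names of) sets of data values, $\delta\subseteq Q\times\Sigma\times C\times OP\times Q$ with $C=\{p(h_i),\,!p(h_i)\}$, $OP=\{-\}\cup\{\mathsf{ins}(h_i)\}$. Configurations are $(q,\langle S_1,\dots,S_m\rangle)$, $S_i\subseteq D$ finite; initially state $q_0$ and all sets empty. On reading $(a,d)$, a transition $(q,a,\alpha,op,q')$ from the current state may be taken if $\alpha=p(h_i)$ and $d\in S_i$, or $\alpha=\,!p(h_i)$ and $d\notin S_i$; then the state becomes $q'$ and if $op=\mathsf{ins}(h_j)$, $d$ is added to $S_j$. A word is accepted if some run reads it entirely and ends in $F$; $\mathcal{L}_{\mathsf{SAFA}}$ is the class of languages accepted by SAFA. A class counting automaton (CCA) is a tuple $(Q,\Sigma,\delta,q_0,F)$ with finite state set $Q$, initial state $q_0$, final states $F$, and $\delta\subseteq Q\times\Sigma\times C\times\mathit{Inst}\times\mathbb{N}\times Q$, where a constraint in $C$ is a pair $(\mathsf{op},e)$ with $\mathsf{op}\in\{<,>,=,\leq,\geq,\neq\}$,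 $e\in\mathbb{N}$, and $\mathit{Inst}=\{\uparrow^+,\downarrow\}$. The automaton maintains a bag $\beta:D\to\mathbb{N}$, initially $\beta(d)=0$ for all $d$. On reading $(a,d)$ in state $q$ it may take a transition $(q,a,(\mathsf{op},e),\mathit{ins},m,q')$ provided $\beta(d)\ \mathsf{op}\ e$ holds; then $\beta(d)$ is increased by $m$ if $\mathit{ins}=\uparrow^+$, or reset to $m$ if $\mathit{ins}=\downarrow$, and the state becomes $q'$. A word is accepted if some run reads it entirely and ends in $F$. $\mathcal{L}_{\mathsf{CCA}}$ is the class of languages accepted by CCA. *)

From mathcomp Require Import all_boot.
From Stdlib Require Import List.
Set Implicit Arguments. Unset Strict Implicit. Unset Printing Implicit Defensive.

(* The fixed countably infinite set of data values D is taken to be nat. *)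
Definition data := nat.

Definition dword (Sigma : Type) := list (Sigma * data).

(* Sets are h_0 .. h_(m-1), indexed by 'I_m.
   Condition p(h_i) is (true, i), !p(h_i) is (false, i).
   Operation '-' is None, ins(h_j) is Some j.
   A transition (q, a, alpha, op, q'). *)
Record SAFA (Sigma : finType) := {
  safa_Q : finType;
  safa_q0 : safa_Q;
  safa_F : {set safa_Q};
  safa_m : nat;
  safa_delta : list (safa_Q * Sigma * (bool * 'I_safa_m) * option 'I_safa_m * safa_Q)
}.

(* Contents of the sets: S i d means d belongs to S_i. *)
Definition safa_upd (m : nat) (S : 'I_m -> data -> bool) (op : option 'I_m) (d : data)
  : 'I_m -> data -> bool :=
  match op with
  | None => S
  | Some j => fun i x => S i x || ((i == j) && (x == d))
  end.

Definition safa_cond (m : nat) (S : 'I_m -> data -> bool) (c : bool * 'I_m) (d : data) : bool :=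
  if c.1 then S c.2 d else ~~ S c.2 d.

Fixpoint safa_acc (Sigma : finType) (M : SAFA Sigma) (q : safa_Q M)
  (S : 'I_(safa_m M) -> data -> bool) (w : dword Sigma) : Prop :=
  match w with
  | nil => q \in safa_F M
  | (a, d) :: w' =>
      exists (alpha : bool * 'I_(safa_m M)) (op : option 'I_(safa_m M)) (q' : safa_Q M),
        In (q, a, alpha, op, q') (safa_delta M) /\
        safa_cond S alpha d /\
        @safa_acc Sigma M q' (safa_upd S op d) w'
  end.

Definition safa_lang (Sigma : finType) (M : SAFA Sigma) (w : dword Sigma) : Prop :=
  @safa_acc Sigma M (safa_q0 M) (fun _ _ => false) w.

Inductive cmp_op := CLt | CGt | CEq | CLe | CGe | CNe.

Definition cmp_sem (o : cmp_op) (x e : nat) : bool :=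
  match o with
  | CLt => x < e
  | CGt => x > e
  | CEq => x == e
  | CLe => x <= e
  | CGe => x >= e
  | CNe => x != e
  end.

(* Instruction: IncBy = up-arrow^+ (increase by m), Reset = down-arrow (reset to m). *)
Inductive cca_inst := IncBy | Reset.

Record CCA (Sigma : finType) := {
  cca_Q : finType;
  cca_q0 : cca_Q;
  cca_F : {set cca_Q};
  cca_delta : list (cca_Q * Sigma * (cmp_op * nat) * cca_inst * nat * cca_Q)
}.

Definition bag_upd (beta : data -> nat) (d : data) (ins : cca_inst) (m : nat) : data -> nat :=
  fun x => if x == d then (match ins with IncBy => beta d + m | Reset => m end) else beta x.

Fixpoint cca_acc (Sigma : finType) (A : CCA Sigma) (q : cca_Q A)
  (beta : data -> nat) (w : dword Sigma) : Prop :=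
  match w with
  | nil => q \in cca_F A
  | (a, d) :: w' =>
      exists (c : cmp_op * nat) (ins : cca_inst) (m : nat) (q' : cca_Q A),
        In (q, a, c, ins, m, q') (cca_delta A) /\
        cmp_sem c.1 (beta d) c.2 /\
        @cca_acc Sigma A q' (bag_upd beta d ins m) w'
  end.

Definition cca_lang (Sigma : finType) (A : CCA Sigma) (w : dword Sigma) : Prop :=
  @cca_acc Sigma A (cca_q0 A) (fun _ => 0) w.

(* A SAFA only remembers, for each datum d, its profile: the set of indices i with d in S_i.
   There are finitely many profiles, so a CCA can keep a code of the profile of d in the counter
   of d; every SAFA transition becomes one CCA transition per profile satisfying its guard, which
   tests the code with "=" and resets it to the code of the updated profile.

   Conversely, the one-state CCA [alt_cca] accepts the words in which the letters read with each
   datum alternate true, false, true, ...  Feed a SAFA with K states and m sets m K + 1 rounds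
   (true on the data 0 .. K-1, then false on the same data), a word [alt_cca] accepts.  The sets
   only grow and hold at most m K pairs (i, d) with d < K, so some round leaves them unchanged;
   along that round the SAFA is an ordinary NFA, and the pigeonhole principle on the K + 1 states
   met while reading its first K letters lets us delete a nonempty factor of true-letters.  The
   SAFA still accepts the shortened word, in which some datum is read with false once more than
   with true, so [alt_cca] rejects it. *)

From mathcomp Require Import all_boot zify.
From Stdlib Require List.
From Stdlib Require Import FunctionalExtensionality.
Set Implicit Arguments. Unset Strict Implicit. Unset Printing Implicit Defensive.

Lemma In_mem (T : eqType) (x : T) (s : seq T) : x \in s -> List.In x s.
Proof. by elim: s => //= y s IH; rewrite in_cons => /orP [/eqP ->|/IH]; auto. Qed.

Section SafaToCca.

Variables (Sigma : finType) (M : SAFA Sigma).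
Local Notation m := (safa_m M).
Local Notation profile_t := {ffun 'I_m -> bool}.

Definition profile (S : 'I_m -> data -> bool) (x : data) : profile_t := [ffun i => S i x].

Definition profile_upd (v : profile_t) (op : option 'I_m) : profile_t :=
  if op is Some j then [ffun i => v i || (i == j)] else v.

Definition profile_cond (v : profile_t) (c : bool * 'I_m) : bool :=
  if c.1 then v c.2 else ~~ v c.2.

(* The empty profile gets code 0, so that the initial bag encodes the initial (empty) sets. *)
Definition profile_code (v : profile_t) : nat :=
  if v == [ffun => false] then 0 else (enum_rank v).+1.

Lemma profile_code_inj : injective profile_code.
Proof.
move=> v w; rewrite /profile_code.
case: eqP => [->|_]; case: eqP => [->|_] //.
by case=> /ord_inj /enum_rank_inj.
Qed.

Definition cca_transitions
    (t : safa_Q M * Sigma * (bool * 'I_m) * option 'I_m * safa_Q M) :=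
  let: (q, a, c, op, q') := t in
  List.flat_map (fun v : profile_t =>
    if profile_cond v c
    then [:: (q, a, (CEq, profile_code v), Reset, profile_code (profile_upd v op), q')]
    else [::])
    (enum profile_t).

Definition cca_of_safa : CCA Sigma :=
  {| cca_Q := safa_Q M; cca_q0 := safa_q0 M; cca_F := safa_F M;
     cca_delta := List.flat_map cca_transitions (safa_delta M) |}.

Definition bag_encodes (beta : data -> nat) (S : 'I_m -> data -> bool) :=
  forall x, beta x = profile_code (profile S x).

Lemma profile_cond_safa S c d : profile_cond (profile S d) c = safa_cond S c d.
Proof. by rewrite /profile_cond /safa_cond ffunE. Qed.

Lemma bag_encodes_upd beta S op d :
  bag_encodes beta S ->
  bag_encodes (bag_upd beta d Reset (profile_code (profile_upd (profile S d) op)))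
              (safa_upd S op d).
Proof.
move=> enc x; rewrite /bag_upd; case: eqP => [->|/eqP neq_xd].
  by congr profile_code; apply/ffunP => i; case: op => [j|]; rewrite !ffunE //= eqxx andbT.
rewrite enc; congr profile_code; apply/ffunP => i.
by case: op => [j|]; rewrite !ffunE //= (negbTE neq_xd) andbF orbF.
Qed.

Lemma In_cca_of_safa q a e ins n q' :
  List.In (q, a, e, ins, n, q') (cca_delta cca_of_safa) <->
  exists c op v, [/\ List.In (q, a, c, op, q') (safa_delta M), profile_cond v c,
                     e = (CEq, profile_code v), ins = Reset
                   & n = profile_code (profile_upd v op)].
Proof.
split.
- case/List.in_flat_map => [[[[[q0 a0] c] op] q0'] [t_in /List.in_flat_map [v [_]]]].
  case: ifP => // cond_v [] // [<- <- <- <- <- <-].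
  by exists c, op, v.
- case=> c [op [v [t_in cond_v -> -> ->]]].
  apply/List.in_flat_map; exists (q, a, c, op, q'); split => //.
  apply/List.in_flat_map; exists v; split; first by apply: In_mem; rewrite mem_enum.
  by rewrite /= cond_v; left.
Qed.

Lemma cca_of_safa_acc w : forall q S beta, bag_encodes beta S ->
  @cca_acc Sigma cca_of_safa q beta w <-> safa_acc q S w.
Proof.
elim: w => [|[a d] w IH] q S beta enc //=; split.
- case=> e [ins [n [q' [/In_cca_of_safa [c [op [v [t_in cond_v -> -> ->]]]] [/= /eqP]]]]].
  rewrite enc => /profile_code_inj v_eq; subst v.
  move/(IH q' _ _ (bag_encodes_upd op d enc)) => acc.
  by rewrite profile_cond_safa in cond_v; exists c, op, q'.
- case=> c [op [q' [t_in [cond_d acc]]]].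
  exists (CEq, profile_code (profile S d)), Reset,
         (profile_code (profile_upd (profile S d) op)), q'; split; [|split].
  + by apply/In_cca_of_safa; exists c, op, (profile S d); rewrite profile_cond_safa.
  + by rewrite /= enc.
  + exact/(IH q' _ _ (bag_encodes_upd op d enc)).
Qed.

Lemma safa_lang_cca : exists A : CCA Sigma, forall w, cca_lang A w <-> safa_lang M w.
Proof.
exists cca_of_safa => w; apply: cca_of_safa_acc => x.
by rewrite /profile_code; case: eqP => // [[]]; apply/ffunP => i; rewrite !ffunE.
Qed.

End SafaToCca.

Section SafaRuns.

Variables (Sigma : finType) (M : SAFA Sigma).
Local Notation Q := (safa_Q M).
Local Notation m := (safa_m M).
Local Notation sets := ('I_m -> data -> bool).

Fixpoint safa_run (q : Q) (S : sets) (w : dword Sigma) (q' : Q) (S' : sets) : Prop :=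
  match w with
  | nil => q' = q /\ S' = S
  | (a, d) :: w' =>
      exists (c : bool * 'I_m) (op : option 'I_m) (q'' : Q),
        [/\ List.In (q, a, c, op, q'') (safa_delta M), safa_cond S c d
          & safa_run q'' (safa_upd S op d) w' q' S']
  end.

Lemma safa_acc_cat w1 w2 q S :
  safa_acc q S (w1 ++ w2) <-> exists q' S', safa_run q S w1 q' S' /\ safa_acc q' S' w2.
Proof.
elim: w1 q S => [|[a d] w1 IH] q S /=.
  by split => [acc|[_ [_ [[-> ->]]]]]; first by exists q, S.
split.
- case=> c [op [q'' [t_in [cond /IH [q' [S' [run acc]]]]]]].
  by exists q', S'; split => //; exists c, op, q''.
- case=> q' [S' [[c [op [q'' [t_in cond run]]]] acc]].
  by exists c, op, q''; do 2!split => //; apply/IH; exists q', S'.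
Qed.

Lemma safa_run_cat w1 w2 q S q2 S2 :
  safa_run q S (w1 ++ w2) q2 S2 <->
  exists q1 S1, safa_run q S w1 q1 S1 /\ safa_run q1 S1 w2 q2 S2.
Proof.
elim: w1 q S => [|[a d] w1 IH] q S /=.
  by split => [run|[_ [_ [[-> ->]]]]]; first by exists q, S.
split.
- case=> c [op [q'' [t_in cond /IH [q1 [S1 [run1 run2]]]]]].
  by exists q1, S1; split => //; exists c, op, q''.
- case=> q1 [S1 [[c [op [q'' [t_in cond run1]]]] run2]].
  by exists c, op, q''; split => //; apply/IH; exists q1, S1.
Qed.

Definition subsets (S T : sets) := forall i x, S i x -> T i x.

Lemma subsets_eq S T : subsets S T -> subsets T S -> S = T.
Proof.
move=> ST TS; apply: functional_extensionality => i.
by apply: functional_extensionality => x; apply/idP/idP; [apply: ST | apply: TS].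
Qed.

Lemma subsets_upd S op d : subsets S (safa_upd S op d).
Proof. by case: op => [j|] i x //= ->. Qed.

Lemma safa_run_subsets w q S q' S' : safa_run q S w q' S' -> subsets S S'.
Proof.
elim: w q S => [|[a d] w IH] q S /=; first by case=> _ ->.
case=> c [op [q'' [_ _ /IH sub]]] i x Sx; exact/sub/subsets_upd.
Qed.

Lemma safa_run_support w q S q' S' :
  safa_run q S w q' S' -> forall i x, S' i x -> S i x || (x \in map snd w).
Proof.
elim: w q S => [|[a d] w IH] q S /=; first by case=> _ -> i x ->.
case=> c [op [q'' [_ _ /IH supp]]] i x /supp {supp}; rewrite in_cons.
case: op => [j|] /=; last by case/orP => ->; rewrite ?orbT.
by case/orP => [/orP [->|/andP [_ ->]]|->]; rewrite ?orbT.
Qed.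

Lemma safa_run_states w q q' S :
  safa_run q S w q' S ->
  exists qs : seq Q, size qs = (size w).+1 /\
    forall k, k <= size w ->
      safa_run q S (take k w) (nth q qs k) S /\ safa_run (nth q qs k) S (drop k w) q' S.
Proof.
elim: w q => [|[a d] w IH] q /=.
  by move=> run; exists [:: q]; split => // [[]].
case=> c [op [q'' [t_in cond run]]].
have upd_S : safa_upd S op d = S.
  exact: subsets_eq (safa_run_subsets run) (@subsets_upd S op d).
rewrite upd_S in run; have [qs [size_qs path_qs]] := IH _ run.
exists (q :: qs); split; first by rewrite /= size_qs.
case=> [_|k le_kw] /=; first by split => //; exists c, op, q''; rewrite upd_S.
rewrite (set_nth_default q'') ?size_qs //.
have [run1 run2] := path_qs k le_kw.
by split => //; exists c, op, q''; rewrite upd_S.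
Qed.

Lemma safa_run_pump w q q' S :
  safa_run q S w q' S -> #|Q| <= size w ->
  exists i j, [/\ i < j, j <= #|Q| & safa_run q S (take i w ++ drop j w) q' S].
Proof.
move=> run le_Qw; have [qs [size_qs path_qs]] := safa_run_states run.
set s := take #|Q|.+1 qs.
have size_s : size s = #|Q|.+1 by rewrite size_takel // size_qs ltnS.
have /(uniqPn q) [i [j [lt_ij lt_js eq_ij]]] : ~~ uniq s.
  apply/negP => /card_uniqP; rewrite size_s => card_s.
  by have := max_card (mem s); rewrite card_s ltnn.
rewrite size_s ltnS in lt_js.
have lt_iQ : i < #|Q| := leq_trans lt_ij lt_js.
rewrite !nth_take ?ltnS ?(ltnW lt_iQ) // in eq_ij.
exists i, j; split => //; apply/safa_run_cat; exists (nth q qs i), S.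
split; first exact: (path_qs i (leq_trans (ltnW lt_iQ) le_Qw)).1.
by rewrite eq_ij; exact: (path_qs j (leq_trans lt_js le_Qw)).2.
Qed.

Definition bounded_by (K : nat) (S : sets) := forall i x, S i x -> x < K.

Definition sets_size (K : nat) (S : sets) := #|[set p : 'I_m * 'I_K | S p.1 p.2]|.

Lemma sets_size_le K S : sets_size K S <= m * K.
Proof. by rewrite /sets_size (leq_trans (max_card _)) // card_prod !card_ord. Qed.

Lemma sets_size_eq K S T :
  subsets S T -> bounded_by K T -> sets_size K T <= sets_size K S -> T = S.
Proof.
move=> ST bT le_TS; apply: subsets_eq => // i x Tx; have lt_xK := bT i x Tx.
have /eqP eq_ST : [set p : 'I_m * 'I_K | S p.1 p.2] == [set p : 'I_m * 'I_K | T p.1 p.2].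
  by rewrite eqEcard le_TS andbT; apply/subsetP => p; rewrite !inE; apply: ST.
have : (i, Ordinal lt_xK) \in [set p : 'I_m * 'I_K | T p.1 p.2] by rewrite inE.
by rewrite -eq_ST inE.
Qed.

Lemma safa_acc_stable_round u K j q S :
  {in map snd u, forall x, x < K} -> bounded_by K S -> m * K < sets_size K S + j ->
  safa_acc q S (flatten (nseq j u)) ->
  exists r q1 S1 q2 v, [/\ safa_run q S (flatten (nseq r u)) q1 S1,
                           safa_run q1 S1 u q2 S1 & safa_acc q2 S1 v].
Proof.
move=> u_lt; elim: j q S => [|j IH] q S bS; first by rewrite addn0 ltnNge sets_size_le.
move=> lt_mK /safa_acc_cat [q' [S' [run acc]]].
have sub := safa_run_subsets run.
have bS' : bounded_by K S'.
  by move=> i x /(safa_run_support run) /orP [/bS|/u_lt].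
have [lt_SS'|le_S'S] := ltnP (sets_size K S) (sets_size K S').
  have [|r [q1 [S1 [q2 [v [run1 run2 acc2]]]]]] := IH q' S' bS' _ acc.
    by apply: leq_trans lt_mK _; rewrite addnS ltn_add2r.
  exists r.+1, q1, S1, q2, v; split => //=.
  by apply/safa_run_cat; exists q', S'.
rewrite (sets_size_eq sub bS' le_S'S) in run acc.
by exists 0, q, S, q', (flatten (nseq j u)).
Qed.

End SafaRuns.

Definition block (b : bool) (s n : nat) : dword bool := [seq (b, x) | x <- iota s n].

Definition round (K : nat) : dword bool := block true 0 K ++ block false 0 K.

Definition alt_cca : CCA bool :=
  {| cca_Q := unit; cca_q0 := tt; cca_F := setT;
     cca_delta := [:: (tt, true, (CEq, 0), Reset, 1, tt); (tt, false, (CEq, 1), Reset, 0, tt)] |}.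

Lemma alt_cca_block b e e' s n beta w :
  List.In (tt, b, (CEq, e), Reset, e', tt) (cca_delta alt_cca) ->
  (forall x, s <= x < s + n -> beta x = e) ->
  @cca_acc bool alt_cca tt (fun x => if s <= x < s + n then e' else beta x) w ->
  @cca_acc bool alt_cca tt beta (block b s n ++ w).
Proof.
move=> t_in; elim: n s beta => [|n IH] s beta beta_e acc.
  by congr (cca_acc _ _ w): acc; apply: functional_extensionality => x; case: ifP => //; lia.
exists (CEq, e), Reset, e', tt; split; [done | split; first by rewrite /= beta_e //; lia].
apply: IH => [x x_in|]; first by rewrite /bag_upd ifN_eq ?beta_e //; lia.
congr (cca_acc _ _ w): acc; apply: functional_extensionality => x; rewrite /bag_upd.
case: (eqVneq x s) => [->|/eqP ne_xs]; first by rewrite leqnn addnS ltnS leq_addr ltnn.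
by case: ifP => in1; case: ifP => in2 //; lia.
Qed.

Lemma alt_cca_round K w :
  @cca_acc bool alt_cca tt (fun _ => 0) w ->
  @cca_acc bool alt_cca tt (fun _ => 0) (round K ++ w).
Proof.
move=> acc; rewrite -catA; apply: (@alt_cca_block true 0 1) => //=; first by left.
apply: (@alt_cca_block false 1 0) => //=; first by right; left.
  by move=> x ->.
by congr (cca_acc _ _ w): acc; apply: functional_extensionality => x; case: ifP => // ->.
Qed.

Lemma alt_cca_rounds K r : cca_lang alt_cca (flatten (nseq r (round K))).
Proof.
elim: r => [|r IH]; first by rewrite /cca_lang /= inE.
exact: alt_cca_round.
Qed.

Lemma alt_cca_count w1 w2 q beta v :
  @cca_acc bool alt_cca q beta (w1 ++ w2) ->
  count_mem (false, v) w1 <= beta v + count_mem (true, v) w1.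
Proof.
elim: w1 q beta => [|[b d] w1 IH] q beta //=.
case=> c [ins [n [q' [t_in [cond /IH]]]]]; rewrite /bag_upd !xpair_eqE /=.
move: cond; case: t_in => [[_ <- <- <- <- _]|[[_ <- <- <- <- _]|[]]] /= /eqP cond;
  case: (eqVneq v d) => [->|_]; rewrite ?eqxx /=; lia.
Qed.

Lemma count_block b b' v s n :
  count_mem (b', v) (block b s n) = (b == b') && (s <= v < s + n).
Proof.
rewrite count_uniq_mem; last by rewrite map_inj_uniq ?iota_uniq // => x y [].
congr nat_of_bool; apply/mapP/idP => [[x x_in [-> ->]]|/andP [/eqP -> v_in]].
  by rewrite eqxx -mem_iota.
by exists v; rewrite ?mem_iota.
Qed.

Lemma count_rounds b v K r : count_mem (b, v) (flatten (nseq r (round K))) = r * (v < K).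
Proof.
elim: r => //= r IH; rewrite count_cat IH /round count_cat !count_block.
by case: b {IH} => /=; rewrite mulSn; lia.
Qed.

Lemma size_round K : size (round K) = K + K.
Proof. by rewrite size_cat !size_map size_iota. Qed.

Lemma data_round K : {in map snd (round K), forall x, x < K}.
Proof. by move=> x; rewrite map_cat -!map_comp !map_id mem_cat mem_iota orbb. Qed.

Lemma round_pumped K i j : i < j <= K ->
  take i (round K) ++ drop j (round K) =
  block true 0 i ++ block true j (K - j) ++ block false 0 K.
Proof.
case/andP => lt_ij le_jK; have lt_iK := leq_trans lt_ij le_jK.
rewrite /round take_cat drop_cat !size_map size_iota lt_iK.
rewrite /block -map_take take_iota (minn_idPl (ltnW lt_iK)).
case: ltnP => [_|le_Kj]; first by rewrite -map_drop drop_iota.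
have -> : j = K by apply/eqP; rewrite eqn_leq le_jK le_Kj.
by rewrite subnn drop0.
Qed.

Lemma safa_not_alt_cca (M : SAFA bool) :
  ~ (forall w, safa_lang M w <-> cca_lang alt_cca w).
Proof.
move=> same_lang; set K := #|safa_Q M|.
have /same_lang acc := alt_cca_rounds K (safa_m M * K).+1.
have [||r [q1 [S1 [q2 [v [run_r run_round acc_v]]]]]] :=
  safa_acc_stable_round (@data_round K) _ _ acc => //.
  by rewrite addnS ltnS leq_addl.
have long_round : K <= size (round K) by rewrite size_round leq_addr.
have [i [j [lt_ij le_jK run_pumped]]] := safa_run_pump run_round long_round.
rewrite round_pumped in run_pumped; last by rewrite lt_ij le_jK.
have : safa_lang M ((flatten (nseq r (round K)) ++
                     block true 0 i ++ block true j (K - j) ++ block false 0 K) ++ v).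
  apply/safa_acc_cat; exists q2, S1; split => //.
  by apply/safa_run_cat; exists q1, S1.
move/same_lang/alt_cca_count => /(_ i); rewrite !count_cat !count_rounds !count_block /=.
have lt_iK : i < K := leq_trans lt_ij le_jK.
by rewrite !add0n addn0 lt_iK ltnn (leqNgt j i) lt_ij; lia.
Qed.

Theorem theorem17 :
  (forall (Sigma : finType) (M : SAFA Sigma),
      exists A : CCA Sigma, forall w : dword Sigma, cca_lang A w <-> safa_lang M w)
  /\
  (exists (Sigma : finType) (A : CCA Sigma),
      forall M : SAFA Sigma, ~ (forall w : dword Sigma, safa_lang M w <-> cca_lang A w)).
Proof.
split; first exact: safa_lang_cca.
by exists bool, alt_cca; exact: safa_not_alt_cca.
Qed.
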